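(* Let $k\ge1$, $m\ge1$, and let $y^0,\bar y^0,\dots,y^{2k},\bar y^{2k}\in\{0,1\}^m$ be $4k+2$ pairwise distinct vectors satisfying $$y^i+\bar y^i=y^0+\bar y^0\quad\text{for all } i\in\{0,\dots,2k\}.$$ With $J$, $j_0$, $U_i$, $\bar U_i$ as defined in the context, there exists $t\in\{2,3,\dots,2k\}$ such that the set $U_0\triangle U_1\triangle U_t$ is different from every $U_p$ and from every $\bar U_p$, for $0\le p\le 2k$.
   Context: **Index sets.** - $I=\{i\in[m]: y^0_i=\bar y^0_i\}$ and $J=[m]\setminus I=\{j: y^0_j+\bar y^0_j=1\}$. The set $J$ is nonempty. - Fix any $j_0\in J$. - For $i\in\{0,\dots,2k\}$, let $U_i=\{j\in J: y^i_j=1\}$ if $y^i_{j_0}=1$, and $U_i=\{j\in J:\bar y^i_j=1\}$ otherwise. - Let $\bar U_i=J\setminus U_i$. Here $\triangle$ denotes symmetric difference of sets. *)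

From mathcomp Require Import all_boot.
Set Implicit Arguments. Unset Strict Implicit. Unset Printing Implicit Defensive.

(* Binary vectors in {0,1}^m are boolean finite functions on 'I_m;
   a coordinate b : bool is read as the number 0/1 via nat_of_bool. *)
Notation bvec m := {ffun 'I_m -> bool}.

Definition Jset m (y0 yb0 : bvec m) : {set 'I_m} :=
  [set j | (y0 j + yb0 j)%N == 1%N].

Definition Uset m (J : {set 'I_m}) (j0 : 'I_m) (yi ybi : bvec m) : {set 'I_m} :=
  if yi j0 then [set j in J | yi j] else [set j in J | ybi j].

Definition Ubar m (J : {set 'I_m}) (j0 : 'I_m) (yi ybi : bvec m) : {set 'I_m} :=
  J :\: Uset J j0 yi ybi.

Definition symdiff (T : finType) (A B : {set T}) : {set T} :=
  (A :\: B) :|: (B :\: A).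

From mathcomp Require Import all_boot.
From mathcomp Require Import zify.

Set Implicit Arguments.
Unset Strict Implicit.
Unset Printing Implicit Defensive.

(* Every U_i contains j0, so U_0 △ U_1 △ U_t contains j0 and differs from every
   Ubar_p.  The sets U_i are pairwise distinct, since outside J all the y^i and
   ybar^i agree with y^0.  If every t >= 2 gave some U_p, then X |-> A △ X with
   A = U_0 △ U_1 <> {} would be a fixed-point-free involution of the family
   {U_i}, whose cardinality 2k+1 is odd. *)

Lemma in_symdiff (T : finType) (A B : {set T}) x :
  (x \in symdiff A B) = (x \in A) (+) (x \in B).
Proof. by rewrite /symdiff !inE; case: (x \in A); case: (x \in B). Qed.

Lemma symdiffK (T : finType) (A : {set T}) : involutive (symdiff A).
Proof. by move=> X; apply/setP => x; rewrite !in_symdiff addbA addbb. Qed.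

Lemma symdiffC (T : finType) (A B : {set T}) : symdiff A B = symdiff B A.
Proof. by apply/setP => x; rewrite !in_symdiff addbC. Qed.

Lemma symdiffKr (T : finType) (A B : {set T}) : symdiff (symdiff A B) B = A.
Proof. by apply/setP => x; rewrite !in_symdiff -addbA addbb addbF. Qed.

Lemma symdiff_eq0 (T : finType) (A B : {set T}) : (symdiff A B == set0) = (A == B).
Proof.
apply/eqP/eqP => [AB0 | ->]; last by apply/setP => x; rewrite in_symdiff addbb inE.
apply/setP => x; move/setP: AB0 => /(_ x); rewrite in_symdiff inE.
by case: (x \in A); case: (x \in B).
Qed.

(* Membership of [e] splits [S] into two halves that [g] exchanges. *)
Lemma even_card_invol_flip (T : finType) (g : T -> T) (S : {set T}) (e : pred T) :
  involutive g -> (forall x, e (g x) = ~~ e x) -> g @: S \subset S -> ~~ odd #|S|.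
Proof.
move=> gK ge gS; have ginj := inv_inj gK.
pose half b := [set x in S | e x == b].
have half_le b : #|half b| <= #|half (~~ b)|.
  rewrite -(card_imset _ ginj); apply: subset_leq_card.
  apply/subsetP => _ /imsetP [x xb ->]; move: xb; rewrite !inE => /andP [xS /eqP ex].
  by rewrite (subsetP gS) ?imset_f // ge ex eqxx.
have halfT : S :&: [set x | e x] = half true.
  by apply/setP => x; rewrite !inE eqb_id.
have halfF : S :\: [set x | e x] = half false.
  by apply/setP => x; rewrite !inE eqbF_neg andbC.
have /eqP halves_eq : #|half true| == #|half false|.
  by rewrite eqn_leq (half_le true) (half_le false).
by rewrite -(cardsID [set x | e x] S) halfT halfF halves_eq addnn odd_double.
Qed.

Lemma exists_symdiff3_notin_family (I T : finType) (U : I -> {set T}) (a b : I) :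
  injective U -> odd #|I| -> a != b ->
  exists t, [/\ t != a, t != b &
    forall p, symdiff (symdiff (U a) (U b)) (U t) != U p].
Proof.
move=> Uinj oddI ab; set A := symdiff (U a) (U b).
have [/existsP [t /and3P [ta tb /forallP tP]] | /existsPn none] :=
  boolP [exists t, [&& t != a, t != b & [forall p, symdiff A (U t) != U p]]].
  by exists t.
have /set0Pn [e eA] : A != set0 by rewrite symdiff_eq0 (inj_eq Uinj).
suff : ~~ odd #|U @: setT| by rewrite card_imset // cardsT oddI.
apply: (@even_card_invol_flip _ (symdiff A) _ (fun X => e \in X)).
- exact: symdiffK.
- by move=> X; rewrite /= in_symdiff eA.
apply/subsetP => _ /imsetP [_ /imsetP [t _ ->] ->].
have [-> | ta] := eqVneq t a.
  by rewrite /A [symdiff (U a) _]symdiffC symdiffKr imset_f ?inE.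
have [-> | tb] := eqVneq t b; first by rewrite /A symdiffKr imset_f ?inE.
by move: (none t); rewrite ta tb => /forallPn [p /negPn /eqP ->]; rewrite imset_f ?inE.
Qed.

Lemma inj_if (I T : eqType) (c : I -> bool) (f g : I -> T) :
  injective f -> injective g -> (forall i j, f i != g j) ->
  injective (fun i => if c i then f i else g i).
Proof.
move=> finj ginj fg i j; case: (c i); case: (c j) => E;
  [exact: finj | by move: (fg i j); rewrite E eqxx
  | by move: (fg j i); rewrite E eqxx | exact: ginj].
Qed.

Section UsetFacts.

Variables (m : nat) (y0 yb0 : bvec m) (j0 : 'I_m).
Let J := Jset y0 yb0.
Hypothesis j0J : j0 \in J.

Lemma j0_in_Uset (y yb : bvec m) :
  (y j0 + yb j0 = y0 j0 + yb0 j0)%N -> j0 \in Uset J j0 y yb.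
Proof.
move=> sum; have : (y j0 + yb j0 == 1)%N by move: j0J; rewrite sum /J /Jset inE.
by rewrite /Uset; case E: (y j0); case F: (yb j0) => //= _; rewrite inE j0J ?E ?F.
Qed.

(* Off [J] both coordinates are equal (sum 0 or 2), hence equal to those of [y0]. *)
Lemma Uset_eq_select (y yb y' yb' : bvec m) :
  (forall j, y j + yb j = y0 j + yb0 j)%N ->
  (forall j, y' j + yb' j = y0 j + yb0 j)%N ->
  Uset J j0 y yb = Uset J j0 y' yb' ->
  (if y j0 then y else yb) = (if y' j0 then y' else yb').
Proof.
move=> sum sum' /setP UU; apply/ffunP => j; move: (UU j) (sum j) (sum' j).
rewrite /Uset /J /Jset.
case: (y j0); case: (y' j0); rewrite !inE;
case: (y j); case: (yb j); case: (y' j); case: (yb' j);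
by case: (y0 j); case: (yb0 j).
Qed.

End UsetFacts.

Theorem lemma2 (k m : nat) (hk : (1 <= k)%N) (hm : (1 <= m)%N)
  (y yb : 'I_(2 * k).+1 -> bvec m)
  (y_inj : injective y) (yb_inj : injective yb)
  (y_yb_diff : forall i j, y i != yb j)
  (hsum : forall (i : 'I_(2 * k).+1) (j : 'I_m),
      (y i j + yb i j)%N = (y ord0 j + yb ord0 j)%N)
  (j0 : 'I_m) (hj0 : j0 \in Jset (y ord0) (yb ord0)) :
  let J := Jset (y ord0) (yb ord0) in
  let U := fun i : 'I_(2 * k).+1 => Uset J j0 (y i) (yb i) in
  let Ub := fun i : 'I_(2 * k).+1 => Ubar J j0 (y i) (yb i) in
  exists t : 'I_(2 * k).+1, (2 <= t)%N /\
    forall p : 'I_(2 * k).+1,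
      symdiff (symdiff (U ord0) (U (inord 1))) (U t) != U p /\
      symdiff (symdiff (U ord0) (U (inord 1))) (U t) != Ub p.
Proof.
move=> J U Ub.
have j0U i : j0 \in U i := j0_in_Uset hj0 (hsum i j0).
have Uinj : injective U.
  move=> i p /(Uset_eq_select (hsum i) (hsum p)).
  exact: (inj_if (c := fun i => y i j0) y_inj yb_inj y_yb_diff).
have val_inord1 : nat_of_ord (inord 1 : 'I_(2 * k).+1) = 1 by rewrite inordK //; lia.
have odd_card : odd #|'I_(2 * k).+1| by rewrite card_ord /= oddM.
have ord01 : ord0 != inord 1 :> 'I_(2 * k).+1.
  by rewrite -(inj_eq val_inj) /= val_inord1.
have [t [t0 t1 tU]] := exists_symdiff3_notin_family Uinj odd_card ord01.
exists t; split.
  by move: t0 t1; rewrite -!(inj_eq val_inj) /= val_inord1; lia.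
move=> p; split; first exact: tU.
have j0_in : j0 \in symdiff (symdiff (U ord0) (U (inord 1))) (U t).
  by rewrite !in_symdiff !j0U.
by apply: contraTneq j0_in => ->; rewrite /Ub /Ubar inE j0U.
Qed.
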